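(* Let $G$ be a finite abelian group of even order, $S$ a symmetric generating set, and $s\in S$ such that $|G'|\ge4$ is even. (1) If $(s,t,s^{-1},t^{-1})\in\mathcal H$ for every $t\in S'$, then $\mathcal H'\subseteq\mathcal H$. (2) If $2(s,t,s^{-1},t^{-1})\in\mathcal H$ for every $t\in S'$, then $2\mathcal H'\subseteq\mathcal H$.
   Context: $X=\mathrm{Cay}(G;S)$ has vertex set $G$ and edges $\{g,gs\}$. For the chosen $s$: $S'=S\setminus\{s,s^{-1}\}$, $G'=\langle S'\rangle$, $X'=\mathrm{Cay}(G';S')$. A flow is $f:G\times S\to\mathbb Z$ with $f(v,a)=-f(va,a^{-1})$ and $\sum_af(v,a)=0$; closed walks $(t_1,\dots,t_n)$ (visiting $e,t_1,t_1t_2,\dots$) are identified with flows ($+1$ on traversed oriented edges, $-1$ on reversals). $\mathcal H$ is the subgroup of flows on $X$ generated by oriented hamiltonian cycles of $X$; $\mathcal H'$ is the subgroup of flows on $X'$ generated by oriented hamiltonian cycles of $X'$, regarded as flows on $X$ by extending by $0$. *)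

From mathcomp Require Import all_boot all_order all_algebra all_fingroup.
Set Implicit Arguments. Unset Strict Implicit. Unset Printing Implicit Defensive.
Import GRing.Theory Num.Theory.
Local Open Scope ring_scope.

Section CayleyFlows.
Variable gT : finGroupType.

(* A walk from the identity is the sequence of its steps (t_1,...,t_n).
   Its vertices are e, t_1, t_1 t_2, ..., t_1...t_{n-1} (the starting
   vertex of each step). *)
Definition walk_vertices (t : seq gT) : seq gT :=
  take (size t) (1%g :: scanl (fun x y => (x * y)%g) 1%g t).

Definition walk_edges (t : seq gT) : seq (gT * gT) := zip (walk_vertices t) t.

(* Flows are functions
   G x S -> Z, represented as functions gT -> gT -> int (zero off G x S). *)
Definition walk_flow (t : seq gT) (v a : gT) : int :=
  (count (pred1 (v, a)) (walk_edges t))%:Z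
  - (count (pred1 ((v * a)%g, a^-1%g)) (walk_edges t))%:Z.

Definition is_ham_cycle (V S : {set gT}) (t : seq gT) : Prop :=
  [/\ all (fun x => x \in S) t,
      size t = #|V|,
      uniq (walk_vertices t)
    & foldl (fun x y => (x * y)%g) 1%g t = 1%g].

Definition in_ham_span (V S : {set gT}) (f : gT -> gT -> int) : Prop :=
  exists l : seq (int * seq gT),
    (forall p, p \in l -> is_ham_cycle V S p.2) /\
    (forall v a, f v a = \sum_(p <- l) p.1 * walk_flow p.2 v a).

End CayleyFlows.

From mathcomp Require Import all_boot all_order all_algebra all_fingroup.
From mathcomp Require Import cyclic zify ring.
Set Implicit Arguments. Unset Strict Implicit. Unset Printing Implicit Defensive.
Import GRing.Theory Num.Theory.
Local Open Scope ring_scope.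

(* Since G is abelian and generated by S' and s, every vertex of X can be
   written h s^j with h in G' and 0 <= j < m, where m is the order of s modulo
   G'.  A hamiltonian cycle (a_1, b_1, ..., a_n, b_n) of X' has even length
   |G'|, so it can be thickened into the hamiltonian "snake"
   (s^(m-1), a_1, s^-(m-1), b_1, ..., s^(m-1), a_n, s^-(m-1), b_n) of X, which
   sweeps the whole coset column of every vertex of X'.  The snake differs from
   the original cycle exactly by translates of the squares (s, a_i, s^-1,
   a_i^-1), and translates of elements of H stay in H (rotate a hamiltonian
   cycle so that it starts at the translating element).  Hence, for k = 1 or 2,
   k times every hamiltonian cycle of X' lies in H as soon as k times every
   square does. *)

Section Walks.
Variable gT : finGroupType.
Implicit Types (x y z v a b : gT) (t : seq gT).

Fixpoint walk_verts x t : seq gT :=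
  if t is a :: t' then x :: walk_verts (x * a)%g t' else [::].

Definition walk_end x t : gT := foldl (fun x y => (x * y)%g) x t.

Definition step_flow x b v a : int :=
  (((x, b) == (v, a)) : nat)%:Z - (((x, b) == ((v * a)%g, a^-1%g)) : nat)%:Z.

Fixpoint walk_flow_from x t v a : int :=
  if t is b :: t' then step_flow x b v a + walk_flow_from (x * b)%g t' v a else 0.

Lemma walk_verticesE t : walk_vertices t = walk_verts 1 t.
Proof. by rewrite /walk_vertices; move: 1%g; elim: t => [|a t IH] x //=; rewrite IH. Qed.

Lemma walk_flowE t v a : walk_flow t v a = walk_flow_from 1 t v a.
Proof.
rewrite /walk_flow /walk_edges walk_verticesE; move: 1%g.
by elim: t => [|b t IH] x //=; rewrite -IH /step_flow !PoszD; ring.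
Qed.

Lemma walk_end_cat x t1 t2 : walk_end x (t1 ++ t2) = walk_end (walk_end x t1) t2.
Proof. exact: foldl_cat. Qed.

Lemma walk_verts_cat x t1 t2 :
  walk_verts x (t1 ++ t2) = walk_verts x t1 ++ walk_verts (walk_end x t1) t2.
Proof. by elim: t1 x => [|b t IH] x //=; rewrite IH. Qed.

Lemma walk_flow_from_cat x t1 t2 v a :
  walk_flow_from x (t1 ++ t2) v a
  = walk_flow_from x t1 v a + walk_flow_from (walk_end x t1) t2 v a.
Proof. by elim: t1 x => [|b t IH] x /=; rewrite ?add0r // IH addrA. Qed.

Lemma size_walk_verts x t : size (walk_verts x t) = size t.
Proof. by elim: t x => [|b t IH] x //=; rewrite IH. Qed.

Lemma walk_end_nseq x z r : walk_end x (nseq r z) = (x * z ^+ r)%g.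
Proof. by elim: r x => [|r IH] x /=; rewrite ?mulg1 // IH expgS mulgA. Qed.

Lemma walk_endMl y x t : walk_end (y * x)%g t = (y * walk_end x t)%g.
Proof. by elim: t x => [|b t IH] x //=; rewrite -mulgA IH. Qed.

Lemma walk_vertsMl y x t : walk_verts (y * x)%g t = [seq (y * z)%g | z <- walk_verts x t].
Proof. by elim: t x => [|b t IH] x //=; rewrite -mulgA IH. Qed.

Lemma step_flowMl y x b v a : step_flow (y * x)%g b v a = step_flow x b (y^-1 * v)%g a.
Proof.
have mulKg_eq w : (y * x == w)%g = (x == y^-1 * w)%g.
  by apply/eqP/eqP => [<-|->]; rewrite ?mulKg ?mulKVg.
by rewrite /step_flow !xpair_eqE !mulKg_eq mulgA.
Qed.

Lemma walk_flow_fromMl y x t v a :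
  walk_flow_from (y * x)%g t v a = walk_flow_from x t (y^-1 * v)%g a.
Proof. by elim: t x => [|b t IH] x //=; rewrite step_flowMl -mulgA IH. Qed.

Lemma step_flow_rev x b v a : step_flow (x * b)%g b^-1 v a = - step_flow x b v a.
Proof.
rewrite /step_flow !xpair_eqE.
have -> : ((x * b == v) && (b^-1 == a))%g = ((x == v * a) && (b == a^-1))%g.
  by apply/andP/andP => [[/eqP <- /eqP <-]|[/eqP -> /eqP ->]]; rewrite ?invgK ?mulgK.
have -> : ((x * b == v * a) && (b^-1 == a^-1))%g = ((x == v) && (b == a))%g.
  apply/andP/andP => [[/eqP xb /eqP /invg_inj ba]|[/eqP -> /eqP ->]] //.
  by subst; move/mulIg: xb => ->.
ring.
Qed.

Lemma walk_verts_subset (H : {group gT}) x t :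
  x \in H -> all (fun a => a \in H) t -> {subset walk_verts x t <= H}.
Proof.
elim: t x => [|b t IH] x Hx //= /andP [Hb Ht] y.
by rewrite inE => /predU1P [-> //|]; apply: IH; rewrite ?groupM.
Qed.

Lemma walk_verts_split x t z : z \in walk_verts x t ->
  exists t1 t2, t = t1 ++ t2 /\ walk_end x t1 = z.
Proof.
elim: t x => [|b t IH] x //=; rewrite inE => /predU1P [->|].
  by exists [::], (b :: t).
by move=> /IH [t1 [t2 [-> <-]]]; exists (b :: t1), t2.
Qed.

End Walks.

Section HamSpan.
Variable gT : finGroupType.
Variables V S : {set gT}.
Implicit Types (f g : gT -> gT -> int).

Lemma in_ham_span_ext f g :
  (forall v a, f v a = g v a) -> in_ham_span V S f -> in_ham_span V S g.
Proof. by move=> fg [l [Hl E]]; exists l; split=> // v a; rewrite -fg E. Qed.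

Lemma in_ham_span0 : in_ham_span V S (fun _ _ => 0).
Proof. by exists [::]; split=> // v a; rewrite big_nil. Qed.

Lemma in_ham_spanD f g : in_ham_span V S f -> in_ham_span V S g ->
  in_ham_span V S (fun v a => f v a + g v a).
Proof.
move=> [l1 [H1 E1]] [l2 [H2 E2]]; exists (l1 ++ l2); split.
  by move=> p; rewrite mem_cat => /orP [/H1|/H2].
by move=> v a; rewrite big_cat E1 E2.
Qed.

Lemma in_ham_spanZ k f : in_ham_span V S f -> in_ham_span V S (fun v a => k * f v a).
Proof.
move=> [l [Hl E]]; exists (map (fun p => (k * p.1, p.2)) l); split.
  by move=> p /mapP [q Hq ->] /=; apply: Hl.
by move=> v a; rewrite big_map E mulr_sumr; apply: eq_bigr => p _; rewrite mulrA.
Qed.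

Lemma in_ham_spanB f g : in_ham_span V S f -> in_ham_span V S g ->
  in_ham_span V S (fun v a => f v a - g v a).
Proof.
move=> Hf Hg; apply: in_ham_span_ext (in_ham_spanD Hf (in_ham_spanZ (-1) Hg)).
by move=> v a; ring.
Qed.

Lemma in_ham_span_sum r (F : nat -> gT -> gT -> int) :
  (forall j, (j < r)%N -> in_ham_span V S (F j)) ->
  in_ham_span V S (fun v a => \sum_(j < r) F j v a).
Proof.
elim: r => [|r IH] HF.
  by apply: in_ham_span_ext in_ham_span0 => v a; rewrite big_ord0.
apply: in_ham_span_ext (in_ham_spanD (IH (fun j lt_j => HF j (ltnW lt_j))) (HF r _)) => //.
by move=> v a; rewrite big_ord_recr.
Qed.

Lemma in_ham_span_cycle p : is_ham_cycle V S p -> in_ham_span V S (walk_flow p).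
Proof.
move=> Hp; exists [:: (1, p)]; split; first by move=> q; rewrite inE => /eqP ->.
by move=> v a; rewrite big_cons big_nil mul1r addr0.
Qed.

Lemma in_ham_span_lincomb (V0 S0 : {set gT}) (F : seq gT -> gT -> gT -> int)
    (l : seq (int * seq gT)) :
  (forall p, is_ham_cycle V0 S0 p -> in_ham_span V S (F p)) ->
  (forall p, p \in l -> is_ham_cycle V0 S0 p.2) ->
  in_ham_span V S (fun v a => \sum_(p <- l) p.1 * F p.2 v a).
Proof.
move=> HF; elim: l => [|p l IH] Hl.
  by apply: in_ham_span_ext in_ham_span0 => v a; rewrite big_nil.
have Hp := in_ham_spanZ p.1 (HF _ (Hl p (mem_head _ _))).
have Hq := IH (fun q Hq => Hl q (mem_behead (s := p :: l) Hq)).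
by apply: in_ham_span_ext (in_ham_spanD Hp Hq) => v a; rewrite big_cons.
Qed.

End HamSpan.

Section Translation.
Variable gT : finGroupType.
Variables (V : {group gT}) (S : {set gT}).
Hypothesis SV : S \subset V.

Lemma ham_cycle_cover t : is_ham_cycle V S t -> {subset V <= walk_verts 1 t}.
Proof.
move=> [St size_t uniq_t _]; rewrite walk_verticesE in uniq_t.
have sub_t : {subset walk_verts 1 t <= V}.
  apply: walk_verts_subset => //; apply/allP => a /(allP St); exact: (subsetP SV).
have card_t : #|[pred x | x \in walk_verts 1 t]| = #|V|.
  by rewrite (card_uniqP uniq_t) size_walk_verts size_t.
have /subset_leqif_card [_] : [pred x | x \in walk_verts 1 t] \subset V.
  exact/subsetP.
by rewrite card_t eqxx => /esym /subsetP.
Qed.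

(* Rotating t so that it starts at its vertex y^-1 translates its flow by y. *)
Lemma ham_cycle_translate t y : is_ham_cycle V S t -> y \in V ->
  exists2 t', is_ham_cycle V S t' &
    forall v a, walk_flow t' v a = walk_flow t (y^-1 * v)%g a.
Proof.
move=> Ht Vy; have [St size_t uniq_t end_t] := Ht.
have [t1 [t2 [def_t end_t1]]] := walk_verts_split (ham_cycle_cover Ht (groupVr Vy)).
have end_t2 : walk_end 1 t2 = y.
  move: end_t; rewrite -/(walk_end 1 t) def_t walk_end_cat end_t1 -[y^-1%g]mulg1.
  by rewrite walk_endMl => /eqP; rewrite -eq_mulVg1 eq_sym => /eqP.
exists (t2 ++ t1); first split.
- by move: St; rewrite def_t !all_cat andbC.
- by rewrite size_cat addnC -size_cat -def_t.
- rewrite walk_verticesE walk_verts_cat end_t2.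
  rewrite -[y]mulg1 -[in walk_verts 1 t2](mulgV y) !walk_vertsMl uniq_catC -map_cat.
  by move: uniq_t; rewrite (map_inj_uniq (mulgI y)) walk_verticesE def_t walk_verts_cat end_t1.
- by rewrite -/(walk_end 1 _) walk_end_cat end_t2 -[y]mulg1 walk_endMl end_t1 mulgV.
- move=> v a; rewrite !walk_flowE def_t !walk_flow_from_cat end_t1 end_t2.
  by rewrite -{1}[y]mulg1 walk_flow_fromMl -{1}[1%g](mulgV y) walk_flow_fromMl addrC.
Qed.

Lemma in_ham_span_translate f y : y \in V ->
  in_ham_span V S f -> in_ham_span V S (fun v a => f (y^-1 * v)%g a).
Proof.
move=> Vy [l [Hl E]].
apply: in_ham_span_ext (in_ham_span_lincomb
  (F := fun p v a => walk_flow p (y^-1 * v)%g a) _ Hl) => [v a|p Hp]; first by rewrite E.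
by have [t' Ht' E'] := ham_cycle_translate Hp Vy; apply: in_ham_span_ext (in_ham_span_cycle Ht').
Qed.

End Translation.

Section Snake.
Variable gT : finGroupType.
Variable s : gT.
Implicit Types (x y z a b v c : gT) (p q : seq gT).

Lemma even_size_ind (P : seq gT -> Prop) :
  P [::] -> (forall a b q, P q -> P [:: a, b & q]) ->
  forall p, ~~ odd (size p) -> P p.
Proof.
move=> P0 P2 p; elim: {p}(size p) {-2}p (leqnn (size p)) => [|n IH] [|a [|b q]] //= Hn.
by rewrite negbK => Hq; apply/P2/IH; rewrite ?ltnS // ltnW.
Qed.

Definition snake_block r a b := nseq r s ++ a :: nseq r s^-1%g ++ [:: b].

Fixpoint snake r p :=
  if p is a :: b :: q then snake_block r a b ++ snake r q else [::].

Definition square_flow x a v c := walk_flow_from x [:: s; a; s^-1; a^-1]%g v c.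

Fixpoint snake_squares r x p v c : int :=
  if p is a :: b :: q then
    \sum_(j < r) square_flow (x * s ^+ j)%g a v c + snake_squares r (x * a * b)%g q v c
  else 0.

Lemma snake_blockE r a b :
  snake_block r a b = (nseq r s ++ a :: nseq r s^-1%g) ++ [:: b].
Proof. by rewrite /snake_block -catA. Qed.

Lemma walk_end_tooth x r a : commute a s ->
  walk_end x (nseq r s ++ a :: nseq r s^-1%g) = (x * a)%g.
Proof.
move=> cas; rewrite walk_end_cat walk_end_nseq /= walk_end_nseq expVgn.
by rewrite -(mulgA x) -(commuteX r cas) mulgA mulgK.
Qed.

Lemma walk_end_snake_block x r a b : commute a s ->
  walk_end x (snake_block r a b) = (x * a * b)%g.
Proof. by move=> cas; rewrite snake_blockE walk_end_cat walk_end_tooth. Qed.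

Lemma square_flowE x a v c : commute a s ->
  square_flow x a v c = step_flow x s v c + step_flow (x * s) a v c
                        + step_flow (x * s * a) s^-1 v c - step_flow x a v c.
Proof.
move=> cas; rewrite /square_flow /=.
have -> : (x * s * a * s^-1 = x * a)%g by rewrite -(mulgA x) -cas mulgA mulgK.
by rewrite step_flow_rev; ring.
Qed.

(* Each extra s-step of the tooth closes one more square with the a-step. *)
Lemma walk_flow_from_tooth r x a v c : commute a s ->
  walk_flow_from x (nseq r s ++ a :: nseq r s^-1%g) v c
  = step_flow x a v c + \sum_(j < r) square_flow (x * s ^+ j)%g a v c.
Proof.
move=> cas; elim: r x => [|r IH] x; first by rewrite /= big_ord0 !addr0.
have -> : nseq r.+1 s ++ a :: nseq r.+1 s^-1%g
          = s :: (nseq r s ++ a :: nseq r s^-1%g) ++ [:: s^-1%g].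
  by rewrite -catA /= -[[:: s^-1%g]]/(nseq 1 _) -nseqD addn1.
rewrite /= walk_flow_from_cat IH walk_end_tooth // big_ord_recl expg0 mulg1.
rewrite [in RHS](eq_bigr (fun j : 'I_r => square_flow (x * s * s ^+ j) a v c)) => [|j _].
  by rewrite square_flowE //=; ring.
by rewrite lift0 expgS mulgA.
Qed.

Lemma walk_flow_from_snake_block r x a b v c : commute a s ->
  walk_flow_from x (snake_block r a b) v c
  = step_flow x a v c + step_flow (x * a) b v c
    + \sum_(j < r) square_flow (x * s ^+ j)%g a v c.
Proof.
move=> cas; rewrite snake_blockE walk_flow_from_cat walk_flow_from_tooth //.
by rewrite walk_end_tooth //= addr0; ring.
Qed.

Lemma walk_flow_from_snake r x p v c :
  ~~ odd (size p) -> all (mem 'C[s]%g) p ->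
  walk_flow_from x (snake r p) v c = walk_flow_from x p v c + snake_squares r x p v c.
Proof.
move=> ev_p; move: p ev_p x; apply: even_size_ind => [|a b q IH] x /=; first by rewrite addr0.
move=> /and3P [/cent1P cas _ Cq].
rewrite walk_flow_from_cat walk_flow_from_snake_block // walk_end_snake_block // IH //.
ring.
Qed.

Lemma walk_end_snake r x p : ~~ odd (size p) -> all (mem 'C[s]%g) p ->
  walk_end x (snake r p) = walk_end x p.
Proof.
move=> ev_p; move: p ev_p x; apply: even_size_ind => [|a b q IH] x //= /and3P [/cent1P cas _ Cq].
by rewrite walk_end_cat walk_end_snake_block // IH.
Qed.

Lemma size_snake r p : ~~ odd (size p) -> size (snake r p) = (r.+1 * size p)%N.
Proof.
move: p; apply: even_size_ind => [|a b q IH] /=; first by rewrite muln0.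
by rewrite size_cat IH /snake_block size_cat /= size_cat !size_nseq /=; lia.
Qed.

Lemma all_snake (P : pred gT) r p : P s -> P s^-1%g ->
  ~~ odd (size p) -> all P p -> all P (snake r p).
Proof.
move=> Ps Psi; move: p; apply: even_size_ind => [|a b q IH] //= /and3P [Pa Pb Pq].
rewrite all_cat IH // /snake_block all_cat /= all_cat /= Pa Pb !andbT.
by rewrite !all_nseq Ps Psi !orbT.
Qed.

Lemma mem_walk_verts_nseq y z r i t : (i <= r)%N -> t != [::] ->
  (y * z ^+ i)%g \in walk_verts y (nseq r z ++ t).
Proof.
elim: r y i => [|r IH] y [|i] //= le_ir nt; rewrite ?expg0 ?mulg1 ?mem_head //.
  by case: t nt => // d t _; rewrite mem_head.
by rewrite inE expgS mulgA IH ?orbT.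
Qed.

Lemma mem_walk_verts_snake r x p v j :
  ~~ odd (size p) -> all (mem 'C[s]%g) p ->
  v \in walk_verts x p -> (j <= r)%N -> (v * s ^+ j)%g \in walk_verts x (snake r p).
Proof.
move=> ev_p; move: p ev_p x; apply: even_size_ind => [|a b q IH] x //= /and3P [/cent1P cas _ Cq].
rewrite walk_verts_cat walk_end_snake_block // mem_cat !inE.
case/predU1P => [->|/predU1P [->|Hv]] le_jr.
- by rewrite /snake_block mem_walk_verts_nseq.
- rewrite /snake_block walk_verts_cat mem_cat walk_end_nseq /= inE.
  have <- : (x * s ^+ r * a * (s^-1) ^+ (r - j) = x * a * s ^+ j)%g.
    rewrite expVgn -{1}(subnKC le_jr) expgD !mulgA -(mulgA _ _ a).
    by rewrite -(commuteX _ cas) mulgA mulgK -!mulgA (commuteX j cas).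
  by rewrite mem_walk_verts_nseq ?leq_subr ?orbT.
- by rewrite IH ?orbT.
Qed.

End Snake.

Section CosetColumns.
Variable gT : finGroupType.
Local Open Scope group_scope.

Lemma expg_order_coset (H : {group gT}) s : s \in 'N(H) -> s ^+ #[coset H s] \in H.
Proof.
by move=> Ns; apply: coset_idr; rewrite ?groupX // morphX // expg_order.
Qed.

Lemma order_coset_mul_card_leq (G H : {group gT}) s :
  H \subset G -> G \subset 'N(H) -> s \in G -> (#[coset H s] * #|H| <= #|G|)%N.
Proof.
move=> HG nHG Gs; rewrite -(Lagrange HG) mulnC leq_mul2l -card_quotient //.
by rewrite dvdn_leq ?orbT // order_dvdG // mem_quotient.
Qed.

Lemma mem_mulg_cycle_coset (H : {group gT}) s g : s \in 'N(H) -> g \in H * <[s]> ->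
  exists h j, [/\ h \in H, (j < #[coset H s])%N & g = h * s ^+ j].
Proof.
move=> Ns /mulsgP [h z Hh /cycleP [i ->] ->]; set m := #[coset H s].
exists (h * (s ^+ m) ^+ (i %/ m)), (i %% m)%N; split.
- by rewrite groupM // groupX // expg_order_coset.
- by rewrite ltn_pmod ?order_gt0.
- by rewrite -mulgA -expgM -expgD mulnC -divn_eq.
Qed.

Lemma gen_sub_mulg_cycle (S : {set gT}) s :
  abelian <<S>> -> s \in S -> <<S>> \subset <<S :\: [set s; s^-1]>> * <[s]>.
Proof.
move=> abS Ss; rewrite -comm_joingE; last first.
  apply/centC/(subset_trans (genS (subsetDl _ _)))/(subset_trans abS)/centS.
  by rewrite cycle_subG mem_gen.
rewrite gen_subG; apply/subsetP => x Sx; case: (boolP (x \in S :\: [set s; s^-1])).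
  by move=> /mem_gen; apply: (subsetP (joing_subl _ _)).
rewrite in_setD Sx andbT negbK in_set2 => /pred2P [] ->.
all: by apply: (subsetP (joing_subr _ _)); rewrite ?groupV cycle_id.
Qed.

End CosetColumns.

Section SnakeCycle.
Variable gT : finGroupType.
Variables (G G' : {group gT}) (S S' : {set gT}) (s : gT).
Hypotheses (abG : abelian G) (SG : S \subset G) (Ss : s \in S) (Sis : s^-1%g \in S).
Hypotheses (S'S : S' \subset S) (G'G : G' \subset G) (S'G' : S' \subset G').
Hypotheses (G_sub : G \subset (G' * <[s]>)%g) (evG' : ~~ odd #|G'|).

Let Gs : s \in G. Proof. exact: subsetP SG s Ss. Qed.

Let S'G a : a \in S' -> a \in G.
Proof. by move=> S'a; apply/(subsetP G'G)/(subsetP S'G'). Qed.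

Let cent_S' p : all (fun a => a \in S') p -> all (mem 'C[s]%g) p.
Proof.
by move=> S'p; apply/allP => a /(allP S'p) /S'G Ga; apply/cent1P/(centsP abG).
Qed.

Let m := #[coset G' s]%g.

Lemma snake_ham_cycle p : is_ham_cycle G' S' p -> is_ham_cycle G S (snake s m.-1 p).
Proof.
move=> Hp; have [S'p size_p _ end_p] := Hp.
have ev_p : ~~ odd (size p) by rewrite size_p.
have nG'G := sub_abelian_norm abG G'G.
set D := snake s m.-1 p.
have cover_D : {subset G <= walk_verts 1 D}.
  move=> g /(subsetP G_sub) /(mem_mulg_cycle_coset (subsetP nG'G s Gs)) [h [j [G'h lt_jm ->]]].
  apply: mem_walk_verts_snake; rewrite ?cent_S' ?(ham_cycle_cover S'G' Hp) //.
  by rewrite -ltnS prednK ?order_gt0.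
have sub_D : {subset walk_verts 1 D <= G}.
  apply: walk_verts_subset; rewrite ?all_snake ?groupV //.
  by apply/allP => a /(allP S'p) /S'G.
have size_D : size (walk_verts 1 D) = (m * #|G'|)%N.
  by rewrite size_walk_verts size_snake // prednK ?order_gt0 // size_p.
have le_mG : (m * #|G'| <= #|G|)%N := order_coset_mul_card_leq G'G nG'G Gs.
have uniq_D : uniq (walk_verts 1 D).
  apply: (leq_size_uniq (enum_uniq (mem G))) => [g|]; first by rewrite mem_enum => /cover_D.
  by rewrite -cardE size_D.
split.
- rewrite all_snake //; apply/allP => a /(allP S'p); exact: (subsetP S'S).
- apply/eqP; rewrite -(size_walk_verts 1) eqn_leq {1}size_D le_mG -(card_uniqP uniq_D).
  by apply/subset_leq_card/subsetP => g /cover_D.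
- by rewrite walk_verticesE.
- by change (walk_end 1 D = 1%g); rewrite walk_end_snake ?cent_S'.
Qed.

Variable k : int.
Hypothesis square_in_span : forall t, t \in S' ->
  in_ham_span G S (fun v c => k * walk_flow [:: s; t; s^-1; t^-1]%g v c).

Lemma snake_squares_in_span r x p : ~~ odd (size p) ->
  all (fun a => a \in S') p -> x \in G ->
  in_ham_span G S (fun v c => k * snake_squares s r x p v c).
Proof.
move=> ev_p; move: p ev_p x; apply: even_size_ind => [|a b q IH] x /=.
  by move=> _ _; apply: in_ham_span_ext (in_ham_span0 _ _) => v c; rewrite mulr0.
move=> /and3P [S'a S'b S'q] Gx.
have squares_a : forall j, (j < r)%N ->
    in_ham_span G S (fun v c => k * square_flow s (x * s ^+ j)%g a v c).
  move=> j _; have Gxj : (x * s ^+ j)%g \in G by rewrite groupM ?groupX.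
  apply: in_ham_span_ext (in_ham_span_translate SG Gxj (square_in_span S'a)) => v c.
  by rewrite /square_flow walk_flowE -walk_flow_fromMl mulg1.
apply: in_ham_span_ext (in_ham_spanD (in_ham_span_sum squares_a)
                          (IH _ S'q (groupM (groupM Gx (S'G S'a)) (S'G S'b)))).
by move=> v c; rewrite mulrDr mulr_sumr.
Qed.

Lemma ham_cycle_in_span p : is_ham_cycle G' S' p ->
  in_ham_span G S (fun v c => k * walk_flow p v c).
Proof.
move=> Hp; have [S'p size_p _ _] := Hp.
have ev_p : ~~ odd (size p) by rewrite size_p.
have snake_in_span := in_ham_spanZ k (in_ham_span_cycle (snake_ham_cycle Hp)).
apply: in_ham_span_ext (in_ham_spanB snake_in_span
                          (snake_squares_in_span m.-1 ev_p S'p (group1 G))) => v c.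
by rewrite !walk_flowE walk_flow_from_snake ?cent_S' //; ring.
Qed.

Lemma in_ham_span_scaled f : in_ham_span G' S' f -> in_ham_span G S (fun v c => k * f v c).
Proof.
move=> [l [Hl E]].
apply: in_ham_span_ext (in_ham_span_lincomb (F := fun p v c => k * walk_flow p v c)
                          ham_cycle_in_span Hl) => v c.
by rewrite E mulr_sumr; apply: eq_bigr => p _; ring.
Qed.

End SnakeCycle.

Unset Implicit Arguments.

Theorem lemma5p9 (gT : finGroupType) (G : {group gT}) (S : {set gT}) (s : gT) :
  abelian G ->
  ~~ odd #|G| ->
  S \subset G ->
  (forall x, x \in S -> x^-1%g \in S) ->
  <<S>>%g = G ->
  s \in S ->
  let S' := S :\: [set s; s^-1%g] in
  let G' := <<S'>>%g in
  (4 <= #|G'|)%N ->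
  ~~ odd #|G'| ->
  ((forall t, t \in S' -> in_ham_span G S (walk_flow [:: s; t; s^-1%g; t^-1%g])) ->
     forall f, in_ham_span G' S' f -> in_ham_span G S f)
  /\
  ((forall t, t \in S' ->
      in_ham_span G S (fun v a => 2 * walk_flow [:: s; t; s^-1%g; t^-1%g] v a)) ->
     forall f, in_ham_span G' S' f -> in_ham_span G S (fun v a => 2 * f v a)).
Proof.
move=> abG _ SG S_symm GS Ss S' G' _ evG'.
have G'G : <<S'>>%G \subset G by rewrite -GS genS // subsetDl.
have G_sub : G \subset (<<S'>>%G * <[s]>)%g by rewrite -{1}GS gen_sub_mulg_cycle ?GS.
have scaled := in_ham_span_scaled abG SG Ss (S_symm s Ss) (subsetDl S _) G'G
                 (subset_gen S') G_sub evG'.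
split=> [squares f Hf|]; last exact: scaled.
apply: in_ham_span_ext (scaled 1 _ f Hf) => [v a|t S't]; first by rewrite mul1r.
by apply: in_ham_span_ext (squares t S't) => v a; rewrite mul1r.
Qed.
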